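(* Let $d\ge 3$. There exist constants $C>1$ and $c\in(0,1)$ depending only on $d$ such that the following holds for every finite field $\mathbb F_q$ of characteristic greater than two. For $j\in\mathbb F_q$ let $S_j=\{x\in\mathbb F_q^d: x_1^2+\cdots+x_d^2=j\}$. Let $i,j\in\mathbb F_q^*$, $E\subset S_i$ and $F\subset S_j$. If $|E||F|\ge Cq^d$, then $|\mathcal D(E,F)|\ge c\,q$.
   Context: $\mathbb F_q$ is a finite field with $q$ elements and characteristic greater than two; $\mathbb F_q^*=\mathbb F_q\setminus\{0\}$. For $\alpha\in\mathbb F_q^d$, $\|\alpha\|=\alpha_1^2+\cdots+\alpha_d^2\in\mathbb F_q$, and for $E,F\subset\mathbb F_q^d$ the distance set is $\mathcal D(E,F)=\{\|x-y\|: x\in E,\ y\in F\}\subset\mathbb F_q$. *)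

From mathcomp Require Import all_boot all_order all_algebra all_field.
From Stdlib Require Import Reals.
Set Implicit Arguments. Unset Strict Implicit. Unset Printing Implicit Defensive.
Import GRing.Theory.
Local Open Scope ring_scope.

Definition sqnorm (F : finFieldType) (d : nat) (a : 'rV[F]_d) : F :=
  \sum_(k < d) a 0 k ^+ 2.

Definition sphere (F : finFieldType) (d : nat) (j : F) : {set 'rV[F]_d} :=
  [set x | sqnorm x == j].

Definition dist_set (F : finFieldType) (d : nat) (E G : {set 'rV[F]_d}) : {set F} :=
  [set sqnorm (x - y) | x in E, y in G].

(* Write x.y for the dot product.  On S_i x S_j we have ||x - y|| = i + j - 2 x.y,
   and 2 is invertible, so |D(E,G)| is the number of values nu(t) > 0, where nu(t)
   counts the pairs of E x G with x.y = t.  By Cauchy-Schwarz,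
   (|E||G|)^2 <= |D(E,G)| sum_t nu(t)^2, so it suffices to show
   q sum_t nu(t)^2 <= (|E||G|)^2 + 4 |E||G| q^d, which gives |D(E,G)| >= q/2 as soon as
   |E||G| >= 4 q^d.  The excess q sum_t nu(t)^2 - (|E||G|)^2 is bounded, again by
   Cauchy-Schwarz, by the variances over t of the level counts #{y in G | x.y = t},
   x in E.  These variances are invariant under x |-> s x (s <> 0), and (s, x) |-> s x
   is at most two-to-one on F^* x E because E lies on a sphere of nonzero radius; so
   their sum over E is at most 2/(q-1) times their sum over all of F^d, which counts
   the pairs (y, y') of G^2 with z.y = z.y' -- a hyperplane condition on z when
   y <> y'. *)

From Stdlib Require Import Reals Lra.
From mathcomp Require Import all_boot all_order all_algebra all_field.
From mathcomp Require Import ring lra.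
Set Implicit Arguments. Unset Strict Implicit. Unset Printing Implicit Defensive.
Import Order.TTheory GRing.Theory Num.Theory.
Local Open Scope ring_scope.

Section SumOfSquares.
Variables (R : realFieldType) (T : finType) (A : {pred T}) (a : T -> R).

Lemma sum_sqr_dev S : \sum_(t in A) a t = S ->
  \sum_(t in A) (#|A|%:R * a t - S) ^+ 2 =
  #|A|%:R * (#|A|%:R * \sum_(t in A) a t ^+ 2 - S ^+ 2).
Proof.
move=> sumS; set n : R := #|A|%:R.
rewrite (eq_bigr (fun t => n ^+ 2 * a t ^+ 2 + S ^+ 2 - 2 * n * S * a t)); last first.
  by move=> t _; rewrite sqrrB; ring.
rewrite sumrB big_split /= sumr_const -!mulr_sumr sumS -mulr_natl -/n; ring.
Qed.

Lemma sqr_sum_le_card_sum_sqr :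
  (\sum_(t in A) a t) ^+ 2 <= #|A|%:R * \sum_(t in A) a t ^+ 2.
Proof.
have [A0 | An0] := eqVneq #|A| 0%N.
  by rewrite big_pred0 ?expr0n ?A0 ?mul0r //; apply: card0_eq.
rewrite -subr_ge0 -(pmulr_rge0 _ (_ : 0 < #|A|%:R)) ?ltr0n ?lt0n //.
by rewrite -(sum_sqr_dev erefl); apply: sumr_ge0 => t _; apply: sqr_ge0.
Qed.

End SumOfSquares.

Lemma card_set_sum (T : finType) (B : {pred T}) (P : pred T) :
  #|[set y in B | P y]| = (\sum_(y in B) P y)%N.
Proof.
rewrite -sum1_card [LHS]big_mkcond [RHS]big_mkcond /=; apply: eq_bigr => y _.
by rewrite inE; case: (y \in B); case: (P y).
Qed.

Lemma double_counting (T U : finType) (A : {pred T}) (B : {pred U})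
    (r : T -> U -> bool) :
  (\sum_(x in A) #|[set y in B | r x y]| = \sum_(y in B) #|[set x in A | r x y]|)%N.
Proof.
under eq_bigr do rewrite card_set_sum.
by rewrite exchange_big /=; apply: eq_bigr => y _; rewrite card_set_sum.
Qed.

Lemma sum_card_fibers (T U : finType) (A : {pred T}) (f : T -> U) :
  (\sum_u #|[set x in A | f x == u]| = #|A|)%N.
Proof.
rewrite -sum1_card (partition_big f predT) //=; apply: eq_bigr => u _.
by rewrite -sum1_card; apply: eq_bigl => x; rewrite inE.
Qed.

Section DotProduct.
Variables (F : finFieldType) (d : nat).
Implicit Types (x y z m : 'rV[F]_d) (s t i : F) (E G : {set 'rV[F]_d}).

Definition dot x y : F := \sum_k x 0 k * y 0 k.

Lemma dotZl s x y : dot (s *: x) y = s * dot x y.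
Proof. by rewrite /dot mulr_sumr; apply: eq_bigr => k _; rewrite mxE mulrA. Qed.

Lemma dotDl x y z : dot (x + y) z = dot x z + dot y z.
Proof. by rewrite /dot -big_split; apply: eq_bigr => k _; rewrite mxE mulrDl. Qed.

Lemma dotBr x y z : dot x (y - z) = dot x y - dot x z.
Proof. by rewrite /dot -sumrB; apply: eq_bigr => k _; rewrite !mxE mulrBr. Qed.

Lemma sqnormB x y : sqnorm (x - y) = sqnorm x + sqnorm y - 2 * dot x y.
Proof.
rewrite /sqnorm /dot mulr_sumr -big_split -sumrB; apply: eq_bigr => k _.
by rewrite !mxE /=; ring.
Qed.

Lemma sqnormZ s x : sqnorm (s *: x) = s ^+ 2 * sqnorm x.
Proof. by rewrite /sqnorm mulr_sumr; apply: eq_bigr => k _; rewrite !mxE; ring. Qed.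

(* The level sets of [dot ^~ m] are translates of its kernel by multiples of a
   vector [a] with [dot a m = 1]. *)
Lemma card_hyperplane_le m :
  m != 0 -> (#|F| * #|[set z | dot z m == 0%R]| <= #|F| ^ d)%N.
Proof.
move=> m0; have [k mk] : exists k, m 0 k != 0.
  apply/existsP; apply: contraR m0 => /existsPn m0; apply/eqP/rowP => k.
  by rewrite mxE; apply/eqP; rewrite -[_ == _]negbK m0.
pose a : 'rV[F]_d := \row_l (if l == k then (m 0 k)^-1 else 0).
have dot_a : dot a m = 1.
  rewrite /dot (bigD1 k) //= big1 => [|l /negbTE lk]; last by rewrite mxE lk mul0r.
  by rewrite mxE eqxx mulVf // addr0.
set K := [set z | dot z m == 0%R].
have -> : (#|F| ^ d = \sum_t #|[set z in [set: 'rV[F]_d] | dot z m == t]|)%N.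
  by rewrite sum_card_fibers cardsT card_mx mul1n.
rewrite -sum_nat_const; apply: leq_sum => t _.
rewrite -(card_imset K (addIr (t *: a))); apply: subset_leq_card.
apply/subsetP => w /imsetP [z]; rewrite !inE => /eqP zm ->.
by rewrite dotDl dotZl zm dot_a add0r mulr1 eqxx.
Qed.

Lemma card_dot_eq_le y y' :
  (#|F| * #|[set z | dot z y == dot z y']| <= #|F| ^ d + #|F| ^ d.+1 * (y == y'))%N.
Proof.
have [<- | neq] := eqVneq y y'.
  rewrite (_ : [set z | dot z y == dot z y] = setT); last first.
    by apply/setP => z; rewrite !inE eqxx.
  by rewrite cardsT card_mx mul1n muln1 -expnS leq_addl.
rewrite muln0 addn0 (_ : [set z | _] = [set z | dot z (y - y') == 0%R]).
  by apply: card_hyperplane_le; rewrite subr_eq0.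
by apply/setP => z; rewrite !inE dotBr subr_eq0.
Qed.

Lemma sphere_scale_eq i s s' x x' : i != 0 -> sqnorm x = i -> sqnorm x' = i ->
  s' != 0 -> s *: x = s' *: x' -> (s', x') = (s, x) \/ (s', x') = (- s, - x).
Proof.
move=> i0 nx nx' s'0 e.
have x'E : x' = (s'^-1 * s) *: x by rewrite -scalerA e scalerA mulVf // scale1r.
have : (s'^-1 * s) ^+ 2 == 1.
  by apply/eqP/(mulIf i0); rewrite mul1r -{1}nx -sqnormZ -x'E nx'.
have sE c : s'^-1 * s = c -> s = s' * c.
  by move=> <-; rewrite mulrA mulfV // mul1r.
rewrite sqrf_eq1 => /orP [] /eqP r; move: (sE _ r); rewrite x'E r => ->.
  by rewrite mulr1 scale1r; left.
by rewrite scaleN1r mulrN1 opprK; right.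
Qed.

Lemma card_sphere_scale_fiber i E z : i != 0 -> E \subset sphere d i ->
  (#|[set p : F * 'rV[F]_d | (p.1 != 0%R) && (p.2 \in E) && (p.1 *: p.2 == z)]| <= 2)%N.
Proof.
move=> i0 sE; set P := [set p | _].
have [-> | [[s x]]] := set_0Vmem P; first by rewrite cards0.
rewrite !inE /= => /andP [/andP [s0 xE] /eqP sxz].
apply: (@leq_trans #|[set (s, x); (- s, - x)]|); last by rewrite cards2; case: (_ != _).
apply/subset_leq_card/subsetP => -[s' x']; rewrite !inE /= -sxz.
move=> /andP [/andP [s'0 x'E] /eqP e].
have onE w : w \in E -> sqnorm w = i by move/(subsetP sE); rewrite inE => /eqP.
by case: (sphere_scale_eq i0 (onE _ xE) (onE _ x'E) s'0 (esym e)) => ->; rewrite eqxx ?orbT.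
Qed.

Lemma sum_sphere_scale_le (R : numDomainType) (h : 'rV[F]_d -> R) i E :
  i != 0 -> E \subset sphere d i -> (forall z, 0 <= h z) ->
  \sum_(s | s != 0) \sum_(x in E) h (s *: x) <= 2 * \sum_z h z.
Proof.
move=> i0 sE h_ge0.
rewrite pair_big_dep /= (partition_big (fun p => p.1 *: p.2) predT) //= mulr_sumr.
apply: ler_sum => z _; rewrite (eq_bigr (fun _ => h z)); last by move=> p /andP [_ /eqP ->].
rewrite sumr_const -[h z *+ _]mulr_natl; apply: ler_wpM2r => //; rewrite ler_nat.
apply: leq_trans (card_sphere_scale_fiber z i0 sE).
by apply/eq_leq/eq_card => p; rewrite inE.
Qed.

Definition dot_set E G : {set F} := [set dot x y | x in E, y in G].

Lemma card_dist_set_spheres i j E G :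
  2 != 0 :> F -> E \subset sphere d i -> G \subset sphere d j ->
  #|dist_set E G| = #|dot_set E G|.
Proof.
move=> two0 sE sG.
have dist_dot x y : x \in E -> y \in G -> sqnorm (x - y) = i + j - 2 * dot x y.
  by move=> /(subsetP sE) + /(subsetP sG); rewrite !inE sqnormB => /eqP -> /eqP ->.
have -> : dist_set E G = (fun t => i + j - 2 * t) @: dot_set E G.
  apply/setP => u; apply/imset2P/imsetP => [[x y xE yG ->] | [_ /imset2P [x y xE yG ->] ->]].
    by exists (dot x y); [apply: imset2_f | rewrite dist_dot].
  by exists x y => //; rewrite dist_dot.
by rewrite card_imset // => t t' /addrI /oppr_inj /(mulfI two0).
Qed.

End DotProduct.

Section Energy.
Variables (F : finFieldType) (d : nat) (G : {set 'rV[F]_d}).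
Implicit Types (x z : 'rV[F]_d) (s t : F).

Definition level_count x t : nat := #|[set y in G | dot x y == t]|.

Definition energy x : nat := #|[set p in setX G G | dot x p.1 == dot x p.2]|.

Lemma sum_level_count x : (\sum_t level_count x t)%N = #|G|.
Proof. exact: sum_card_fibers. Qed.

Lemma energyE x : energy x = (\sum_t level_count x t ^ 2)%N.
Proof.
rewrite /energy -(sum_card_fibers _ (fun p => dot x p.1)); apply: eq_bigr => t _.
rewrite -mulnn -cardsX; apply: eq_card => -[y y']; rewrite !inE /=.
have [<-|_] := eqVneq (dot x y) t; last by rewrite !andbF.
by rewrite !andbT [dot x y' == _]eq_sym andbA.
Qed.

Lemma energyZ s x : s != 0 -> energy (s *: x) = energy x.
Proof. by move=> s0; apply: eq_card => p; rewrite !inE !dotZl (inj_eq (mulfI s0)). Qed.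

Lemma sum_energy_le :
  (#|F| * \sum_z energy z <= #|G| ^ 2 * #|F| ^ d + #|F| ^ d.+1 * #|G|)%N.
Proof.
rewrite /energy (double_counting predT (setX G G)) big_distrr /=.
apply: (@leq_trans (\sum_(p in setX G G) (#|F| ^ d + #|F| ^ d.+1 * (p.1 == p.2)))%N).
  by apply: leq_sum => p _; apply: card_dot_eq_le.
rewrite big_split /= sum_nat_const cardsX mulnn -big_distrr /= leq_add2l leq_mul2l.
apply/orP; right; rewrite -card_set_sum.
apply: leq_trans (leq_imset_card (fun y => (y, y)) G); apply/subset_leq_card/subsetP.
by move=> -[y y']; rewrite !inE /= => /andP [/andP [yG _] /eqP <-]; apply: imset_f.
Qed.

End Energy.

Section DotCount.
Variables (F : finFieldType) (d : nat) (E G : {set 'rV[F]_d}).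

Definition dot_count t : nat := \sum_(x in E) level_count G x t.

Lemma sum_dot_count : (\sum_t dot_count t = #|E| * #|G|)%N.
Proof.
by rewrite exchange_big /= (eq_bigr _ (fun x _ => sum_level_count G x)) sum_nat_const.
Qed.

Lemma dot_count_eq0 t : t \notin dot_set E G -> dot_count t = 0%N.
Proof.
move=> tD; apply: big1 => x xE; apply/eqP; rewrite cards_eq0; apply/eqP/setP => y.
by rewrite !inE; apply: contraNF tD => /andP [yG /eqP <-]; apply: imset2_f.
Qed.

End DotCount.

Section Deviation.
Variables (F : finFieldType) (d : nat).
Implicit Types (x z : 'rV[F]_d) (E G : {set 'rV[F]_d}).
Local Notation q := (#|F|%:R : rat).

Definition level_dev G x : rat :=
  \sum_t (q * (level_count G x t)%:R - #|G|%:R) ^+ 2.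

Lemma level_devE G x : level_dev G x = q ^+ 2 * (energy G x)%:R - q * #|G|%:R ^+ 2.
Proof.
rewrite /level_dev (@sum_sqr_dev _ _ predT _ (#|G|%:R)); last first.
  by rewrite -natr_sum sum_level_count.
rewrite energyE natr_sum; under [in RHS]eq_bigr do rewrite natrX.
change (#|predT|%:R : rat) with q; ring.
Qed.

Lemma level_dev_ge0 G x : 0 <= level_dev G x.
Proof. by apply: sumr_ge0 => t _; apply: sqr_ge0. Qed.

Lemma level_devZ G s x : s != 0 -> level_dev G (s *: x) = level_dev G x.
Proof. by move=> s0; rewrite !level_devE energyZ. Qed.

Lemma sum_level_dev_le G : \sum_z level_dev G z <= q ^+ 2 * q ^+ d * #|G|%:R.
Proof.
rewrite (eq_bigr _ (fun z _ => level_devE G z)) sumrB sumr_const -mulr_sumr.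
rewrite card_mx mul1n -[_ *+ (_ ^ _)]mulr_natl natrX -natr_sum.
have := sum_energy_le G; rewrite -(ler_nat rat) !natrD !natrM !natrX exprS.
set S := (\sum_z _)%:R => hS.
have := ler_wpM2l (ler0n _ #|F|) hS; nra.
Qed.

Lemma sum_sphere_level_dev_le G i E : i != 0 -> E \subset sphere d i ->
  (q - 1) * \sum_(x in E) level_dev G x <= 2 * \sum_z level_dev G z.
Proof.
move=> i0 sE; have := sum_sphere_scale_le i0 sE (level_dev_ge0 G).
rewrite (eq_bigr (fun _ => \sum_(x in E) level_dev G x)); last first.
  by move=> s s0; apply: eq_bigr => x _; rewrite level_devZ.
rewrite sumr_const cardC1 -[_ *+ #|F|.-1]mulr_natl -subn1 natrB //.
exact: ltnW (card_finNzRing_gt1 F).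
Qed.

Lemma sum_dot_count_dev_le E G :
  \sum_t (q * (dot_count E G t)%:R - #|E|%:R * #|G|%:R) ^+ 2 <=
  #|E|%:R * \sum_(x in E) level_dev G x.
Proof.
rewrite exchange_big /= mulr_sumr; apply: ler_sum => t _.
have -> : q * (dot_count E G t)%:R - #|E|%:R * #|G|%:R =
          \sum_(x in E) (q * (level_count G x t)%:R - #|G|%:R).
  by rewrite sumrB -mulr_sumr -natr_sum sumr_const; congr (_ - _); rewrite mulr_natl.
exact: sqr_sum_le_card_sum_sqr.
Qed.

Lemma sum_dot_count_sqr_le i E G : i != 0 -> E \subset sphere d i ->
  q * \sum_t (dot_count E G t)%:R ^+ 2 <=
  (#|E|%:R * #|G|%:R) ^+ 2 + 4 * (#|E|%:R * #|G|%:R) * q ^+ d.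
Proof.
move=> i0 sE; set e : rat := #|E|%:R; set g : rat := #|G|%:R.
set Q := \sum_t _; pose Y := q * Q - (e * g) ^+ 2.
pose V := \sum_(x in E) level_dev G x; pose W := \sum_z level_dev G z.
have q2 : 2 <= q by rewrite (ler_nat _ 2) card_finNzRing_gt1.
have qY_le : q * Y <= e * V.
  have := sum_dot_count_dev_le E G; rewrite (@sum_sqr_dev _ _ predT _ (e * g)) //.
  by rewrite /e /g -natrM -sum_dot_count natr_sum.
have V_le : (q - 1) * V <= 2 * W := sum_sphere_level_dev_le G i0 sE.
have W_le : W <= q ^+ 2 * q ^+ d * g := sum_level_dev_le G.
have e0 : 0 <= e by apply: ler0n.
have g0 : 0 <= g by apply: ler0n.
have P0 : 0 <= q ^+ d by apply: exprn_ge0; lra.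
have h : (q - 1) * (q * Y) <= 2 * e * (q ^+ 2 * q ^+ d * g).
  apply: (@le_trans _ _ ((q - 1) * (e * V))); first by apply: ler_wpM2l => //; lra.
  have := ler_wpM2l e0 V_le; have := ler_wpM2l e0 W_le; lra.
have Y_le : Y <= 4 * (e * g) * q ^+ d.
  have [Y_le0 | Y_gt0] := lerP Y 0.
    by apply: le_trans Y_le0 _; rewrite !mulr_ge0.
  rewrite -(ler_pM2l (_ : 0 < q ^+ 2)); last by apply: exprn_gt0; lra.
  have : 0 <= (q - 2) * (q * Y) by apply: mulr_ge0; [lra | apply: mulr_ge0; lra].
  lra.
by rewrite /Y in Y_le; lra.
Qed.

Lemma card_dot_set_ge i E G : i != 0 -> E \subset sphere d i ->
  (4 * #|F| ^ d <= #|E| * #|G|)%N -> (#|F| <= 2 * #|dot_set E G|)%N.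
Proof.
move=> i0 sE; rewrite -!(ler_nat rat) !natrM natrX => hEG.
set D := dot_set E G; set e : rat := #|E|%:R; set g : rat := #|G|%:R.
pose Q : rat := \sum_t (dot_count E G t)%:R ^+ 2.
have CS : (e * g) ^+ 2 <= #|D|%:R * Q.
  rewrite -natrM -sum_dot_count natr_sum (bigID (mem D)) /= [X in _ + X]big1.
    rewrite addr0; apply: le_trans (sqr_sum_le_card_sum_sqr _ _) _.
    apply: ler_wpM2l => //; rewrite [X in _ <= X](bigID (mem D)) /= lerDl.
    by apply: sumr_ge0 => t _; apply: sqr_ge0.
  by move=> t /dot_count_eq0 ->.
have hQ : q * Q <= 2 * (e * g) ^+ 2.
  have := sum_dot_count_sqr_le G i0 sE; rewrite -/e -/g -/Q.
  have := ler_wpM2l (_ : 0 <= e * g) hEG; rewrite ?mulr_ge0 //; nra.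
have P_gt0 : 0 < q ^+ d by rewrite exprn_gt0 // ltr0n ltnW // card_finNzRing_gt1.
have eg_gt0 : 0 < (e * g) ^+ 2 by rewrite exprn_gt0 //; lra.
rewrite -(ler_pM2r eg_gt0).
have := ler_wpM2l (ler0n _ #|F|) CS; have := ler_wpM2l (ler0n _ #|D|) hQ; nra.
Qed.

End Deviation.

(* ssralg claims the [%R] delimiter for [ring_scope]; the statement below means
   Stdlib's reals by it. *)
Local Delimit Scope R_scope with R.

Lemma INR_expn (m n : nat) : INR (m ^ n)%N = (INR m ^ n)%R.
Proof. by elim: n => [|n IH] //; rewrite expnS mulnE mult_INR IH. Qed.

Theorem theorem3p3 (d : nat) (hd : (3 <= d)%N) :
  exists (C c : R), (1 < C)%R /\ (0 < c < 1)%R /\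
    forall (F : finFieldType),
      (forall p : nat, p \in GRing.pchar F -> (2 < p)%N) ->
      forall (i j : F) (E G : {set 'rV[F]_d}),
        i != GRing.zero -> j != GRing.zero ->
        E \subset sphere d i -> G \subset sphere d j ->
        (C * INR #|F| ^ d <= INR (#|E| * #|G|))%R ->
        (c * INR #|F| <= INR #|dist_set E G|)%R.
Proof.
exists 4%R, (/ 2)%R; split; [Lra.lra | split; [Lra.lra |]].
move=> F char_gt2 i j E G i0 _ sE sG hC.
have two0 : 2 != 0 :> F.
  apply/negP => /eqP two_eq0.
  by have := char_gt2 2; rewrite inE /= two_eq0 eqxx => /(_ isT).
have hN : (4 * #|F| ^ d <= #|E| * #|G|)%N.
  apply/ssrnat.leP/INR_le; rewrite mulnE mult_INR INR_expn -mulnE.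
  by rewrite (_ : INR 4 = 4%R) //=; Lra.lra.
have /ssrnat.leP/le_INR := card_dot_set_ge i0 sE hN.
rewrite (card_dist_set_spheres two0 sE sG) mulnE mult_INR /=; Lra.lra.
Qed.
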